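(* Let $A:\mathbb{R}^n\to\mathbb{R}^n$ be a nonsingular linear operator that is generalized sign-regular (GSR) with respect to a totally positive structure $\{K_1,\ldots,K_n\}$. Then for every $j=1,\ldots,n$: $$A(\widehat{T}(K_j))\subseteq\widehat{T}(K_j)\qquad\text{and}\qquad A(\widehat{T}(K_1,\ldots,K_j))\subseteq\widehat{T}(K_1,\ldots,K_j).$$
   Context: A proper cone is a closed convex cone that is pointed and solid. $\wedge^j\mathbb{R}^n$ is the $j$th exterior power of $\mathbb{R}^n$; $\wedge^jA$ is the operator on it with $(\wedge^jA)(x_1\wedge\cdots\wedge x_j)=Ax_1\wedge\cdots\wedge Ax_j$. A linear operator $B$ is $K$-nonnegative if $BK\subseteq K$. A totally positive structure is a family $\{K_1,\ldots,K_n\}$, $K_j\subset\wedge^j\mathbb{R}^n$ a proper cone; $A$ is GSR with respect to it if there are $\epsilon_1,\ldots,\epsilon_n\in\{\pm1\}$ with $\epsilon_j\wedge^jA$ being $K_j$-nonnegative for each $j$. Define $\widehat{T}(K_1)=K_1\cup(-K_1)$; for $j\ge2$, $\widehat{T}(K_j)$ is the set of all $x_1\in\mathbb{R}^n$ for which there exist $x_2,\ldots,x_j\in\mathbb{R}^n$ with $x_1\wedge\cdots\wedge x_j\in(K_j\cup(-K_j))\setminus\{0\}$, together with $0$; and $\widehat{T}(K_1,\ldots,K_j)$ is the closure of the set of all $x_1\in\mathbb{R}^n$ for which there exist $x_2\in\widehat{T}(K_1)\setminus\{0\},\ldots,x_j\in\widehat{T}(K_1,\ldots,K_{j-1})\setminus\{0\}$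 with $x_1\wedge\cdots\wedge x_j\in(K_j\cup(-K_j))\setminus\{0\}$. *)

From HB Require Import structures.
From mathcomp Require Import all_boot all_order all_algebra.
From mathcomp Require Import all_classical all_reals all_analysis.
Set Implicit Arguments. Unset Strict Implicit. Unset Printing Implicit Defensive.
Import Order.TTheory GRing.Theory Num.Theory.
Import numFieldNormedType.Exports.
Local Open Scope classical_set_scope.
Local Open Scope ring_scope.

(* Vectors of R^n are column vectors 'cV[R]_n; A acts by x |-> A *m x. *)

(* j-element subsets of {0,..,n-1}: they index the standard (Pluecker) basis
   e_{i_1} /\ ... /\ e_{i_j} (i_1 < ... < i_j) of the exterior power /\^j R^n. *)
Notation jsub n j := {S : {set 'I_n} | #|S| == j}.

(* The k-th smallest element of S (k : 'I_j). *)
Definition sidx n j (S : jsub n j) (k : 'I_j) : 'I_n :=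
  @enum_val _ (pred_of_set (val S)) (cast_ord (esym (eqP (valP S))) k).

(* /\^j R^n, identified with R^(n choose j) via the standard basis. *)
Definition ext (R : realType) (n j : nat) := 'cV[R]_#|{: jsub n j}|.

(* x_1 /\ ... /\ x_j  (x k = x_{k+1}): its coordinate on e_S is the j x j
   minor of the n x j matrix [x_1 ... x_j] on the rows S. *)
Definition wedge (R : realType) (n j : nat) (x : 'I_j -> 'cV[R]_n) : ext R n j :=
  \col_i \det (\matrix_(k, l) x l (sidx (enum_val i) k) ord0).

(* /\^j A : the j-th compound matrix (the matrix of /\^j A in the standard
   basis), entries are the j x j minors of A. *)
Definition compound (R : realType) (n j : nat) (A : 'M[R]_n) : 'M[R]_#|{: jsub n j}| :=
  \matrix_(i, i') \det (\matrix_(k, l) A (sidx (enum_val i) k) (sidx (enum_val i') l)).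

Definition convex_cone (R : realType) m (K : set 'cV[R]_m) : Prop :=
  K 0 /\ (forall x y, K x -> K y -> K (x + y)) /\
  (forall (a : R) x, 0 <= a -> K x -> K (a *: x)).

Definition proper_cone (R : realType) m (K : set 'cV[R]_m) : Prop :=
  [/\ convex_cone K, closed K,
      (forall x, K x -> K (- x) -> x = 0) &
      exists x, interior K x ].

Definition TP_structure (R : realType) n (K : forall j : nat, set (ext R n j)) : Prop :=
  forall j, (1 <= j <= n)%N -> proper_cone (K j).

Definition K_nonneg (R : realType) m (K : set 'cV[R]_m) (B : 'M[R]_m) : Prop :=
  forall y, K y -> K (B *m y).

Definition GSR (R : realType) n (K : forall j : nat, set (ext R n j)) (A : 'M[R]_n) : Prop :=
  exists eps : nat -> R, forall j, (1 <= j <= n)%N ->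
    (eps j = 1 \/ eps j = -1) /\ K_nonneg (K j) (eps j *: compound j A).

Definition symm (R : realType) m (K : set 'cV[R]_m) : set 'cV[R]_m :=
  [set y | K y \/ K (- y)].

Definition That (R : realType) n (K : forall j : nat, set (ext R n j)) (j : nat)
  : set 'cV[R]_n :=
  match j with
  | 0 => set0
  | 1 => [set x | symm (K 1%N) (wedge (fun _ : 'I_1 => x))]
  | j'.+1 =>
      [set x | exists x' : 'I_j'.+1 -> 'cV[R]_n,
          x' ord0 = x /\ symm (K j'.+1) (wedge x') /\ wedge x' <> 0]
      `|` [set 0]
  end.

(* Tupto K m i = \widehat{T}(K_1,...,K_i) for 1 <= i <= m. *)
Fixpoint Tupto (R : realType) n (K : forall j : nat, set (ext R n j)) (m : nat)
  : nat -> set 'cV[R]_n :=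
  match m with
  | 0 => fun _ => set0
  | m'.+1 => fun i =>
      if (i <= m')%N then Tupto K m' i
      else if m' is 0 then That K 1
      else closure
        [set x | exists x' : 'I_m'.+1 -> 'cV[R]_n,
           [/\ x' ord0 = x,
               (forall k : 'I_m'.+1, (1 <= k)%N ->
                  Tupto K m' k (x' k) /\ x' k <> 0) ,
               symm (K m'.+1) (wedge x') & wedge x' <> 0]]
  end.

Definition Tseq (R : realType) n (K : forall j : nat, set (ext R n j)) (j : nat)
  : set 'cV[R]_n := Tupto K j j.

From HB Require Import structures.
From mathcomp Require Import all_boot all_order all_algebra.
From mathcomp Require Import all_classical all_reals all_analysis.
From mathcomp Require Import fingroup perm.
Import Order.TTheory GRing.Theory Num.Theory.
Import numFieldNormedType.Exports.
Local Open Scope ring_scope.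

(* By the Cauchy-Binet formula, /\^j (A x_l) = (/\^j A)(/\^j x_l): the compound
   matrix carries wedges of a j-tuple to wedges of its image under A.  GSR says
   exactly that +-(/\^j A) maps K_j into K_j, hence K_j u (-K_j) into itself,
   and invertibility of A keeps nonzero vectors and nonzero wedges nonzero.
   So A maps every witness tuple of T(K_j) or T(K_1,...,K_j) to a witness
   tuple, and the closure in T(K_1,...,K_j) is preserved by continuity. *)

Set Implicit Arguments. Unset Strict Implicit.

Lemma sidx_inj n j (S : jsub n j) : injective (sidx S).
Proof. by move=> a b /enum_val_inj /cast_ord_inj. Qed.

Lemma sidx_in n j (S : jsub n j) k : sidx S k \in val S.
Proof. exact: enum_valP. Qed.

Lemma sidxP n j (S : jsub n j) x : x \in val S -> exists k, sidx S k = x.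
Proof.
move=> xS; exists (cast_ord (eqP (valP S)) (enum_rank_in xS x)).
by rewrite /sidx cast_ordK enum_rankK_in.
Qed.

Lemma sidx_perm_imset n j (S : jsub n j) (s : 'S_j) :
  val S = [set sidx S (s i) | i in 'I_j].
Proof.
apply/setP => x; apply/idP/imsetP => [xS | [i _ ->]]; last exact: sidx_in.
by have [k <-] := sidxP xS; exists (s^-1 k)%g; rewrite ?permKV.
Qed.

Definition sidx_perm n j (p : jsub n j * 'S_j) : {ffun 'I_j -> 'I_n} :=
  [ffun i => sidx p.1 (p.2 i)].

Lemma sidx_perm_inj n j : injective (@sidx_perm n j).
Proof.
move=> [S s] [S' s'] /ffunP E.
have ES : S = S'.
  apply: val_inj; rewrite (sidx_perm_imset S s) (sidx_perm_imset S' s').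
  by apply: eq_imset => i; have := E i; rewrite !ffunE.
subst S'; congr (_, _); apply/permP => i.
by apply: (@sidx_inj n j S); have := E i; rewrite !ffunE.
Qed.

(* An injection 'I_j -> 'I_n is an enumeration of its image, reordered. *)
Lemma injectiveb_sidx_permE n j :
  [set f : {ffun 'I_j -> 'I_n} | injectiveb f] = [set sidx_perm p | p in setT].
Proof.
apply/setP => f; rewrite inE; apply/idP/imsetP => [/injectiveP injf|]; last first.
  move=> [[S s] _ ->]; apply/injectiveP => a b; rewrite !ffunE.
  by move/sidx_inj/perm_inj.
have cardS : #|[set f i | i in 'I_j]| == j by rewrite card_imset // card_ord.
pose S : jsub n j := Sub [set f i | i in 'I_j] cardS.
have /fin_all_exists [t Et] : forall i, exists k, sidx S k = f i.
  by move=> i; apply: sidxP; rewrite /= imset_f.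
have injt : injective t by move=> a b E; apply: injf; rewrite -!Et E.
exists (S, perm injt); first by rewrite in_setT.
by apply/ffunP => i; rewrite ffunE /= permE Et.
Qed.

Section CauchyBinet.
Variable R : comPzRingType.

Lemma det_mulmx_ffun j n (B : 'M[R]_(j, n)) (X : 'M[R]_(n, j)) :
  \det (B *m X) = \sum_(f : {ffun 'I_j -> 'I_n})
     (\prod_i B i (f i)) * \det (\matrix_(i, l) X (f i) l).
Proof.
transitivity (\sum_(s : 'S_j) (-1) ^+ s * \sum_(f : {ffun 'I_j -> 'I_n})
     \prod_i (B i (f i) * X (f i) (s i))).
  apply: eq_bigr => s _; congr (_ * _).
  rewrite -(bigA_distr_bigA (fun i k => B i k * X k (s i))) /=.
  by apply: eq_bigr => i _; rewrite mxE.
under eq_bigr => s _ do rewrite big_distrr.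
rewrite exchange_big; apply: eq_bigr => f _ /=.
rewrite /determinant big_distrr; apply: eq_bigr => s _.
rewrite big_split /= mulrCA; congr (_ * (_ * _)).
by apply: eq_bigr => i _; rewrite mxE.
Qed.

Lemma det_row_sidx_perm j n (X : 'M[R]_(n, j)) (S : jsub n j) (s : 'S_j) :
  \det (\matrix_(i, l) X (sidx_perm (S, s) i) l)
  = (-1) ^+ s * \det (\matrix_(k, l) X (sidx S k) l).
Proof.
have -> : \matrix_(i, l) X (sidx_perm (S, s) i) l
          = row_perm s (\matrix_(k, l) X (sidx S k) l).
  by apply/matrixP => a b; rewrite !mxE ffunE.
by rewrite row_permE det_mulmx det_perm.
Qed.

Theorem cauchy_binet j n (B : 'M[R]_(j, n)) (X : 'M[R]_(n, j)) :
  \det (B *m X) = \sum_(S : jsub n j)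
    \det (\matrix_(k, l) B k (sidx S l)) * \det (\matrix_(k, l) X (sidx S k) l).
Proof.
rewrite det_mulmx_ffun (bigID (fun f : {ffun 'I_j -> 'I_n} => injectiveb f)) /=.
rewrite [X in _ + X]big1 ?addr0; last first.
  move=> f /injectivePn [i1 [i2 Di12 Ef12]].
  by rewrite (determinant_alternate Di12) ?mulr0 // => l; rewrite !mxE Ef12.
rewrite (eq_bigl (fun f => f \in [set sidx_perm p | p in setT])); last first.
  by move=> f; rewrite -injectiveb_sidx_permE inE.
rewrite big_imset /=; last by move=> p q _ _ /sidx_perm_inj.
rewrite (eq_bigl (fun p => predT p.1 && predT p.2)); last by move=> p; rewrite in_setT.
rewrite -(pair_big predT predT (fun S s => (\prod_i B i (sidx_perm (S, s) i)) *
  \det (\matrix_(i, l) X (sidx_perm (S, s) i) l))) /=.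
apply: eq_bigr => S _.
under eq_bigr => s _ do rewrite det_row_sidx_perm mulrCA mulrA.
rewrite -big_distrl /=; congr (_ * _).
rewrite /determinant; apply: eq_bigr => s _; congr (_ * _).
by apply: eq_bigr => i _; rewrite mxE ffunE.
Qed.

End CauchyBinet.

Lemma wedge_mulmx (R : realType) n j (A : 'M[R]_n) (x : 'I_j -> 'cV[R]_n) :
  wedge (fun l => A *m x l) = compound j A *m wedge x.
Proof.
apply/colP => i; rewrite !mxE.
set S := enum_val i.
pose B := \matrix_(k, m) A (sidx S k) m.
pose X := \matrix_(m, l) x l m ord0.
have -> : \matrix_(k, l) (A *m x l) (sidx S k) ord0 = B *m X.
  by apply/matrixP => k l; rewrite !mxE; apply: eq_bigr => m _; rewrite !mxE.
rewrite cauchy_binet (big_enum_val (op := +%R) (A := predT)).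
apply: eq_bigr => i' _; rewrite !mxE.
by congr (_ * _); congr (\det _); apply/matrixP => a b; rewrite !mxE.
Qed.

Lemma wedge_mulmx_neq0 (R : realType) n j (A : 'M[R]_n) (x : 'I_j -> 'cV[R]_n) :
  A \in unitmx -> wedge x <> 0 -> wedge (fun l => A *m x l) <> 0.
Proof.
move=> Au nz Ax0; apply: nz.
have := wedge_mulmx (invmx A) (fun l => A *m x l).
by rewrite Ax0 mulmx0 (funext (fun l => mulKmx Au (x l))).
Qed.

Local Open Scope classical_set_scope.

Lemma mulmx_continuous (R : realType) m n (A : 'M[R]_(m, n)) :
  continuous (fun x : 'cV[R]_n => A *m x).
Proof.
have -> : (fun x : 'cV[R]_n => A *m x) = (fun x => \sum_(k < n) x k ord0 *: col k A).
  apply: funext => x; apply/colP => i; rewrite !mxE summxE.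
  by apply: eq_bigr => k _; rewrite !mxE mulrC.
apply: continuous_big; first exact: add_continuous.
by move=> k _ x; apply: continuousZr_tmp; exact: coord_continuous.
Qed.

Lemma image_closure_sub (T U : topologicalType) (f : T -> U) (E : set T) :
  continuous f -> f @` closure E `<=` closure (f @` E).
Proof.
move=> fc _ [x clx <-] B Bn.
have [y [Ey By]] := clx _ (fc x B Bn).
by exists (f y); split => //; exists y.
Qed.

Lemma symm_mulmx (R : realType) m (K : set 'cV[R]_m) (B : 'M[R]_m) (e : R) :
  e = 1 \/ e = -1 -> K_nonneg K (e *: B) ->
  forall w, symm K w -> symm K (B *m w).
Proof.
move=> [->|->]; rewrite ?scale1r ?scaleN1r => KB w [Kw|Kw].
- by left; apply: KB.
- by right; rewrite -mulmxN; apply: KB.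
- by right; rewrite -mulNmx; apply: KB.
- by left; rewrite -[B *m w]opprK -mulNmx -mulmxN; apply: KB.
Qed.

Section Invariance.
(* Keeps [j] from becoming an implicit argument of the variable [K]. *)
Local Unset Implicit Arguments.
Variables (R : realType) (n : nat) (K : forall j : nat, set (ext R n j)) (A : 'M[R]_n).
Hypotheses (Au : A \in unitmx) (AGSR : GSR K A).

Lemma symm_compound j w : (1 <= j <= n)%N ->
  symm (K j) w -> symm (K j) (compound j A *m w).
Proof. by case: AGSR => eps epsP /epsP [epsE KA]; apply: symm_mulmx KA w. Qed.

Lemma symm_wedge_mulmx j (x : 'I_j -> 'cV[R]_n) : (1 <= j <= n)%N ->
  symm (K j) (wedge x) -> symm (K j) (wedge (fun l => A *m x l)).
Proof. by rewrite wedge_mulmx; apply: symm_compound. Qed.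

Lemma mulmx_unit_neq0 (v : 'cV[R]_n) : v <> 0 -> A *m v <> 0.
Proof. by move=> nz Av0; apply: nz; rewrite -(mulKmx Au v) Av0 mulmx0. Qed.

Lemma That_mulmx_sub j : (1 <= j <= n)%N ->
  (fun x => A *m x) @` That K j `<=` That K j.
Proof.
case: j => [|[|j]] hj //=.
  by move=> _ [x Kx <-]; apply: (symm_wedge_mulmx 1 (fun=> x)).
move=> _ [x [[x' [x'0 [Kx' x'_neq0]]] | ->] <-]; last by right; rewrite mulmx0.
left; exists (fun k => A *m x' k); split; first by rewrite x'0.
by split; [apply: symm_wedge_mulmx | apply: wedge_mulmx_neq0].
Qed.

Lemma Tupto_mulmx_sub m i : (m <= n)%N ->
  (fun x => A *m x) @` Tupto K m i `<=` Tupto K m i.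
Proof.
elim: m i => [|m IH] i hm /=; first by move=> _ [x []].
case: ifP => hi; first exact/IH/ltnW.
case: m IH hm hi => [|m] IH hm hi; first by apply: (That_mulmx_sub 1); rewrite hm.
move=> y /(image_closure_sub (@mulmx_continuous R n n A)); apply: closureS.
move=> _ [x [x' [x'0 Tx' Kx' x'_neq0]] <-].
exists (fun k => A *m x' k); split.
- by rewrite x'0.
- move=> k hk; have [Tx'k x'k_neq0] := Tx' k hk.
  by split; [apply: (IH _ (ltnW hm)); exists (x' k) | apply: mulmx_unit_neq0].
- exact: symm_wedge_mulmx.
- exact: wedge_mulmx_neq0.
Qed.

End Invariance.

Theorem theorem21 (R : realType) (n : nat) (K : forall j : nat, set (ext R n j))
    (A : 'M[R]_n) :
  TP_structure K -> A \in unitmx -> GSR K A ->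
  forall j : nat, (1 <= j <= n)%N ->
    (fun x => A *m x) @` That K j `<=` That K j /\
    (fun x => A *m x) @` Tseq K j `<=` Tseq K j.
Proof.
move=> _ Au AGSR j hj; split; first exact: That_mulmx_sub.
by apply: Tupto_mulmx_sub => //; case/andP: hj.
Qed.
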